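(* Let $G$ act on $M$ and consider the induced action on $p$-dimensional submanifolds, with a moving frame producing invariant differential operators $\mathcal{D}_1,\dots,\mathcal{D}_p$ satisfying $[\mathcal{D}_j,\mathcal{D}_k]=\sum_{i=1}^p Y^i_{jk}\mathcal{D}_i$. Let $I=(I_1,\dots,I_p)$ be differential invariants such that the $p\times p$ matrix $\mathcal{D}(I)=(\mathcal{D}_iI_l)$ is nonsingular. Then every commutator invariant $Y^i_{jk}$ can be expressed as a rational function of the invariant derivatives of order $\le2$ of $I_1,\dots,I_p$.
   Context: The commutator invariants $Y^i_{jk}=-Y^i_{kj}$ are the differential invariants appearing as coefficients in the commutation formulae of the invariant differential operators $\mathcal{D}_1,\dots,\mathcal{D}_p$ (the total derivations dual to the contact-invariant coframe obtained from the moving frame). *)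

From HB Require Import structures.
From mathcomp Require Import all_boot all_order all_algebra.
Set Implicit Arguments. Unset Strict Implicit. Unset Printing Implicit Defensive.
Import GRing.Theory.
Local Open Scope ring_scope.

(* Syntactic rational expressions with integer coefficients in the
   invariant derivatives of order <= 2 of I_1..I_p:
   vI l      stands for I_l,
   vD1 a l   stands for D_a I_l,
   vD2 a b l stands for D_a D_b I_l. *)
Inductive dexpr (p : nat) : Type :=
  | vI  of 'I_p
  | vD1 of 'I_p & 'I_p
  | vD2 of 'I_p & 'I_p & 'I_p
  | eCst of int
  | eAdd of dexpr p & dexpr p
  | eOpp of dexpr p
  | eMul of dexpr p & dexpr p
  | eInv of dexpr p.

Fixpoint deval (p : nat) (R : unitRingType) (D : 'I_p -> R -> R)
    (I : 'I_p -> R) (e : dexpr p) : R :=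
  match e with
  | vI l => I l
  | vD1 a l => D a (I l)
  | vD2 a b l => D a (D b (I l))
  | eCst z => z%:~R
  | eAdd e1 e2 => deval D I e1 + deval D I e2
  | eOpp e1 => - deval D I e1
  | eMul e1 e2 => deval D I e1 * deval D I e2
  | eInv e1 => (deval D I e1)^-1
  end.

Definition is_derivation (R : comUnitRingType) (d : R -> R) : Prop :=
  (forall f g, d (f + g) = d f + d g) /\ (forall f g, d (f * g) = d f * g + f * d g).

From HB Require Import structures.
From mathcomp Require Import all_boot all_order all_algebra perm.
Import GRing.Theory.
Local Open Scope ring_scope.

(* Theorem 4.4 is Cramer's rule.  Fix j, k and apply the commutation formula
   [D_j, D_k] = sum_c Y^c_jk D_c to each invariant I_l: the row vector
   y = (Y^c_jk)_c solves the linear system  y *m D(I) = v  whose right-hand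
   side v_l = D_j D_k I_l - D_k D_j I_l consists of invariant derivatives of
   order 2.  Since D(I) is invertible, Cramer's rule gives
   Y^i_jk = det (D(I) with row i replaced by v) / det D(I),
   and both determinants are polynomials in the entries, i.e. in the
   invariant derivatives of order <= 2 of I. *)

Section Cramer.
Context {R : comUnitRingType} {n : nat}.

Definition row_subst (M : 'M[R]_n) (i : 'I_n) (v : 'rV[R]_n) : 'M[R]_n :=
  \matrix_(a, l) if a == i then v 0 l else M a l.

Lemma cofactor_row_subst M i v l :
  cofactor (row_subst M i v) i l = cofactor M i l.
Proof.
rewrite /cofactor; congr (_ * \det _); apply/matrixP => a b.
by rewrite !mxE eq_sym (negbTE (neq_lift i a)).
Qed.

Lemma cramer_row (i : 'I_n) {M : 'M[R]_n} {y v : 'rV[R]_n} :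
  M \in unitmx -> y *m M = v -> y 0 i = \det (row_subst M i v) / \det M.
Proof.
move=> Mu yMv; have -> : y = v *m invmx M by rewrite -yMv mulmxK.
rewrite mxE (expand_det_row _ i) big_distrl /=; apply: eq_bigr => l _.
by rewrite /invmx Mu !mxE eqxx cofactor_row_subst mulrCA mulrC.
Qed.

End Cramer.

Section Expressions.
Variable p : nat.

Definition eSum {T : Type} (s : seq T) (f : T -> dexpr p) : dexpr p :=
  foldr (fun x acc => eAdd (f x) acc) (eCst p 0) s.
Definition eProd {T : Type} (s : seq T) (f : T -> dexpr p) : dexpr p :=
  foldr (fun x acc => eMul (f x) acc) (eCst p 1) s.

Lemma deval_sum (R : unitRingType) D I (T : Type) (s : seq T) f :
  deval (R := R) D I (eSum s f) = \sum_(x <- s) deval D I (f x).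
Proof. by elim: s => [|x s IH] /=; rewrite ?big_nil ?big_cons ?IH. Qed.

Lemma deval_prod (R : unitRingType) D I (T : Type) (s : seq T) f :
  deval (R := R) D I (eProd s f) = \prod_(x <- s) deval D I (f x).
Proof. by elim: s => [|x s IH] /=; rewrite ?big_nil ?big_cons ?IH. Qed.

Definition eDet (E : 'I_p -> 'I_p -> dexpr p) : dexpr p :=
  eSum (index_enum {perm 'I_p}) (fun s =>
    eMul (eCst p ((-1) ^+ perm.odd_perm s))
         (eProd (index_enum 'I_p) (fun x => E x (s x)))).

Lemma deval_det (R : comUnitRingType) D I E :
  deval (R := R) D I (eDet E) = \det (\matrix_(a, l) deval D I (E a l)).
Proof.
rewrite /eDet deval_sum /determinant; apply: eq_bigr => s _ /=.
rewrite deval_prod rmorph_sign; congr (_ * _).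
by apply: eq_bigr => x _; rewrite mxE.
Qed.

End Expressions.

Arguments eDet {p}.

Lemma commutator_system {p : nat} {R : comUnitRingType} {D : 'I_p -> R -> R}
    {Y : 'I_p -> 'I_p -> 'I_p -> R} (I : 'I_p -> R) (j k : 'I_p) :
  (forall a b f, D a (D b f) - D b (D a f) = \sum_(c < p) Y c a b * D c f) ->
  (\row_c Y c j k) *m (\matrix_(a, l) D a (I l))
    = \row_l (D j (D k (I l)) - D k (D j (I l))).
Proof.
move=> commD; apply/matrixP => z l; rewrite !mxE commD.
by apply: eq_bigr => c _; rewrite !mxE.
Qed.

Theorem theorem4p4 (p : nat) (i j k : 'I_p) :
  exists e : dexpr p,
    forall (R : comUnitRingType) (D : 'I_p -> R -> R)
           (Y : 'I_p -> 'I_p -> 'I_p -> R) (I : 'I_p -> R),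
      (forall a, is_derivation (D a)) ->
      (forall a b f, D a (D b f) - D b (D a f) = \sum_(c < p) Y c a b * D c f) ->
      \det (\matrix_(a < p, l < p) D a (I l)) \is a GRing.unit ->
      Y i j k = deval D I e.
Proof.
(* numerator: D(I) with row i replaced by [D_j, D_k] I; denominator: D(I) *)
pose numer a l := if a == i then eAdd (vD2 j k l) (eOpp (vD2 k j l)) else vD1 a l.
exists (eMul (eDet numer) (eInv (eDet (@vD1 p)))).
move=> R D Y I _ commD detDI_unit /=.
have DI_unit : \matrix_(a, l) D a (I l) \in unitmx by rewrite unitmxE.
have -> : Y i j k = (\row_c Y c j k) 0 i by rewrite mxE.
rewrite (cramer_row i DI_unit (commutator_system I j k commD)) !deval_det.
congr (\det _ / _); apply/matrixP => a l.
by rewrite !mxE /numer; case: (a == i).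
Qed.
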